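(* There exist $\mathfrak{c}$ pairwise non-homeomorphic topologies $\tau\in\mathcal{L}$ such that $(\mathbb{R},\tau)$ is a metrizable space of first category.
   Context: $\mathfrak{c}=|\mathbb{R}|$. $\eta$ denotes the Euclidean topology on $\mathbb{R}$. $\mathcal{L}$ denotes the family of all Hausdorff topologies $\tau$ on the set $\mathbb{R}$ with $\tau\subset\eta$. *)

From Stdlib Require Import Reals.
Open Scope R_scope.

Definition topology_on_R := (R -> Prop) -> Prop.

Definition is_topology (tau : topology_on_R) : Prop :=
  tau (fun _ => False) /\ tau (fun _ => True) /\
  (forall U V, tau U -> tau V -> tau (fun x => U x /\ V x)) /\
  (forall F : (R -> Prop) -> Prop, (forall U, F U -> tau U) ->
      tau (fun x => exists U, F U /\ U x)).

Definition eta : topology_on_R := fun U => open_set U.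

Definition coarser (tau sigma : topology_on_R) : Prop :=
  forall U, tau U -> sigma U.

Definition hausdorff (tau : topology_on_R) : Prop :=
  forall x y, x <> y -> exists U V, tau U /\ tau V /\ U x /\ V y /\
    (forall z, ~ (U z /\ V z)).

Definition in_L (tau : topology_on_R) : Prop :=
  is_topology tau /\ hausdorff tau /\ coarser tau eta.

Definition is_metric (d : R -> R -> R) : Prop :=
  (forall x y, 0 <= d x y) /\ (forall x y, d x y = 0 <-> x = y) /\
  (forall x y, d x y = d y x) /\ (forall x y z, d x z <= d x y + d y z).

Definition metrizable (tau : topology_on_R) : Prop :=
  exists d, is_metric d /\
    forall U, tau U <-> (forall x, U x -> exists e, 0 < e /\
                           forall y, d x y < e -> U y).

Definition closure (tau : topology_on_R) (A : R -> Prop) : R -> Prop :=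
  fun x => forall U, tau U -> U x -> exists y, U y /\ A y.

Definition nowhere_dense (tau : topology_on_R) (A : R -> Prop) : Prop :=
  forall U, tau U -> (forall x, U x -> closure tau A x) -> forall x, ~ U x.

Definition first_category (tau : topology_on_R) : Prop :=
  exists A : nat -> (R -> Prop), (forall n, nowhere_dense tau (A n)) /\
    forall x, exists n, A n x.

Definition continuous_between (tau sigma : topology_on_R) (f : R -> R) : Prop :=
  forall V, sigma V -> tau (fun x => V (f x)).

Definition homeomorphic (tau sigma : topology_on_R) : Prop :=
  exists f g : R -> R, (forall x, g (f x) = x) /\ (forall y, f (g y) = y) /\
    continuous_between tau sigma f /\ continuous_between sigma tau g.

(* The topologies are metric topologies of metrics d_P (P ⊆ ℕ) on ℝ, all coarser
   than the Euclidean one.  The first summand of d_P, the dyadic pseudo-norm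
   N(t) = sup_k 2^-k dist(t/2^k, ℤ), makes x + 2^m converge to x, so bounded sets are
   nowhere dense and (ℝ, d_P) is of first category.  The second summand records,
   on the negative half-line only, the N-distance to a closed set F_P made of the
   nodes a_n = (4^n - 1)/3 together with the intervals [a_(j+1), a_(j+1) + 1/2]
   for j ∈ P.  Then x ≥ 0 iff x is a limit of points tending to +∞, and x ≤ 0 or
   x ∈ F_P iff x is a limit of points tending to -∞.
   Since dist(·, ℤ) cannot jump continuously from small to large values, every
   d_P → d_Q homeomorphism is Euclidean continuous, hence monotone; it must be
   increasing, maps F_P onto F_Q fixing each node, and so P = Q.  Indexing P by
   the dyadic rationals below r gives continuum many such topologies. *)

From Stdlib Require Import Reals Lra Lia ZArith Classical Cantor.
Open Scope R_scope.

Lemma IZR_abs_ge1 (z : Z) : z <> 0%Z -> 1 <= Rabs (IZR z).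
Proof.
  intros Hz. destruct (Z_lt_le_dec 0 z).
  - rewrite Rabs_right; [apply IZR_le; lia | apply Rle_ge, IZR_le; lia].
  - rewrite Rabs_left by (apply IZR_lt; lia).
    replace 1 with (- IZR (-1)) by (simpl; lra).
    apply Ropp_le_contravar, IZR_le; lia.
Qed.

Definition nearest_int (x : R) : Z := (up (x + /2) - 1)%Z.

Definition dist_Z (x : R) : R := Rabs (x - IZR (nearest_int x)).

Lemma dist_Z_le_half (x : R) : dist_Z x <= /2.
Proof.
  destruct (archimed (x + /2)) as [H1 H2]. unfold dist_Z, nearest_int.
  rewrite minus_IZR. simpl. apply Rabs_le. lra.
Qed.

Lemma dist_Z_ge0 (x : R) : 0 <= dist_Z x.
Proof. apply Rabs_pos. Qed.

Lemma dist_Z_le (x : R) (m : Z) : dist_Z x <= Rabs (x - IZR m).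
Proof.
  pose proof (dist_Z_le_half x) as Hhalf. unfold dist_Z in *.
  destruct (Z.eq_dec m (nearest_int x)) as [<-|Hne]; [lra|].
  assert (Hm : 1 <= Rabs (IZR m - IZR (nearest_int x)))
    by (rewrite <- minus_IZR; apply IZR_abs_ge1; lia).
  assert (Rabs (IZR m - IZR (nearest_int x))
            <= Rabs (x - IZR m) + Rabs (x - IZR (nearest_int x))).
  { replace (IZR m - IZR (nearest_int x))
      with (-(x - IZR m) + (x - IZR (nearest_int x))) by ring.
    rewrite <- (Rabs_Ropp (x - IZR m)). apply Rabs_triang. }
  lra.
Qed.

Lemma dist_Z_shift (x : R) (k : Z) : dist_Z (x + IZR k) = dist_Z x.
Proof.
  apply Rle_antisym.
  - eapply Rle_trans; [apply (dist_Z_le _ (nearest_int x + k))|].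
    rewrite plus_IZR. right. unfold dist_Z. f_equal. ring.
  - eapply Rle_trans; [apply (dist_Z_le _ (nearest_int (x + IZR k) - k))|].
    rewrite minus_IZR. right. unfold dist_Z. f_equal. ring.
Qed.

Lemma dist_Z_IZR (k : Z) : dist_Z (IZR k) = 0.
Proof.
  apply Rle_antisym; [|apply dist_Z_ge0].
  eapply Rle_trans; [apply (dist_Z_le _ k)|]. rewrite Rminus_diag, Rabs_R0. lra.
Qed.

Lemma dist_Z_opp (x : R) : dist_Z (- x) = dist_Z x.
Proof.
  assert (Hle : forall y, dist_Z (- y) <= dist_Z y).
  { intros y. eapply Rle_trans; [apply (dist_Z_le _ (- nearest_int y))|].
    rewrite opp_IZR. unfold dist_Z. rewrite <- Rabs_Ropp. right. f_equal. ring. }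
  apply Rle_antisym; [apply Hle|]. rewrite <- (Ropp_involutive x) at 1. apply Hle.
Qed.

Lemma dist_Z_add (x y : R) : dist_Z (x + y) <= dist_Z x + dist_Z y.
Proof.
  eapply Rle_trans; [apply (dist_Z_le _ (nearest_int x + nearest_int y))|].
  rewrite plus_IZR. unfold dist_Z.
  replace (x + y - (IZR (nearest_int x) + IZR (nearest_int y)))
    with ((x - IZR (nearest_int x)) + (y - IZR (nearest_int y))) by ring.
  apply Rabs_triang.
Qed.

Lemma dist_Z_lipschitz (x y : R) : Rabs (dist_Z x - dist_Z y) <= dist_Z (x - y).
Proof.
  pose proof (dist_Z_add (x - y) y) as Hx. pose proof (dist_Z_add (y - x) x) as Hy.
  replace (x - y + y) with x in Hx by ring. replace (y - x + x) with y in Hy by ring.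
  replace (y - x) with (- (x - y)) in Hy by ring. rewrite dist_Z_opp in Hy.
  apply Rabs_le. lra.
Qed.

Lemma dist_Z_le_abs (x : R) : dist_Z x <= Rabs x.
Proof. eapply Rle_trans; [apply (dist_Z_le _ 0)|]. rewrite Rminus_0_r. lra. Qed.

Lemma dist_Z_small (x : R) : Rabs x < /2 -> dist_Z x = Rabs x.
Proof.
  intros Hx. unfold dist_Z.
  destruct (Z.eq_dec (nearest_int x) 0) as [->|Hne]; [now rewrite Rminus_0_r|].
  exfalso. pose proof (IZR_abs_ge1 _ Hne). pose proof (dist_Z_le_half x). unfold dist_Z in *.
  assert (Rabs (IZR (nearest_int x)) <= Rabs x + Rabs (x - IZR (nearest_int x))).
  { replace (IZR (nearest_int x)) with (x - (x - IZR (nearest_int x))) at 1 by ring.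
    rewrite <- (Rabs_Ropp (x - IZR (nearest_int x))). apply Rabs_triang. }
  lra.
Qed.

Lemma pow2_pos (k : nat) : 0 < 2 ^ k.
Proof. apply pow_lt; lra. Qed.

Lemma half_pow_pos (k : nat) : 0 < (/2) ^ k.
Proof. apply pow_lt; lra. Qed.

Lemma half_pow_le1 (k : nat) : (/2) ^ k <= 1.
Proof. rewrite <- (pow1 k). apply pow_incr. lra. Qed.

Lemma half_pow_antimono (k m : nat) : (m <= k)%nat -> (/2) ^ k <= (/2) ^ m.
Proof.
  intros Hmk. replace k with ((k - m) + m)%nat by lia. rewrite pow_add.
  pose proof (half_pow_le1 (k - m)). pose proof (half_pow_pos m). nra.
Qed.

Lemma pow2_unbounded (x : R) : exists k, x < 2 ^ k.
Proof.
  destruct (Pow_x_infinity 2 ltac:(rewrite Rabs_right; lra) (x + 1)) as [k Hk].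
  exists k. specialize (Hk k (Nat.le_refl k)).
  rewrite Rabs_right in Hk by (left; apply pow2_pos). lra.
Qed.

Lemma pow2_large_and_half_pow_small (e c : R) : 0 < e -> exists m, (/2) ^ m < e /\ c < 2 ^ m.
Proof.
  intros He. destruct (pow2_unbounded (Rmax (/ e) c)) as [m Hm]. exists m.
  pose proof (Rmax_l (/ e) c). pose proof (Rmax_r (/ e) c). split; [|lra].
  rewrite pow_inv. pose proof (pow2_pos m).
  replace e with (/ / e) by (field; lra). apply Rinv_lt_contravar; [|lra].
  apply Rmult_lt_0_compat; [apply Rinv_0_lt_compat|]; lra.
Qed.

Definition dyadic_term (k : nat) (t : R) : R := (/2) ^ k * dist_Z (t / 2 ^ k).

Lemma dyadic_term_ge0 (k : nat) (t : R) : 0 <= dyadic_term k t.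
Proof. apply Rmult_le_pos; [left; apply half_pow_pos | apply dist_Z_ge0]. Qed.

Lemma dyadic_term_le_half (k : nat) (t : R) : dyadic_term k t <= /2.
Proof.
  unfold dyadic_term. pose proof (half_pow_le1 k). pose proof (half_pow_pos k).
  pose proof (dist_Z_le_half (t / 2 ^ k)). pose proof (dist_Z_ge0 (t / 2 ^ k)). nra.
Qed.

Lemma dyadic_term_add (k : nat) (s t : R) :
  dyadic_term k (s + t) <= dyadic_term k s + dyadic_term k t.
Proof.
  unfold dyadic_term. rewrite <- Rmult_plus_distr_l.
  apply Rmult_le_compat_l; [left; apply half_pow_pos|].
  unfold Rdiv. rewrite Rmult_plus_distr_r. apply dist_Z_add.
Qed.

Lemma dyadic_term_opp (k : nat) (t : R) : dyadic_term k (- t) = dyadic_term k t.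
Proof.
  unfold dyadic_term, Rdiv. rewrite Ropp_mult_distr_l_reverse, dist_Z_opp. reflexivity.
Qed.

Lemma dyadic_term_le_abs (k : nat) (t : R) : dyadic_term k t <= Rabs t.
Proof.
  unfold dyadic_term. pose proof (dist_Z_le_abs (t / 2 ^ k)) as Ht.
  pose proof (pow2_pos k). pose proof (half_pow_pos k). pose proof (half_pow_le1 k).
  assert (Habs : Rabs (t / 2 ^ k) <= Rabs t).
  { unfold Rdiv. rewrite Rabs_mult, Rabs_inv, (Rabs_right (2 ^ k)) by lra.
    rewrite <- pow_inv. pose proof (Rabs_pos t). nra. }
  pose proof (dist_Z_ge0 (t / 2 ^ k)). nra.
Qed.

Lemma dyadic_terms_bound (t : R) : bound (fun v => exists k, v = dyadic_term k t).
Proof. exists (/2). intros v [k ->]. apply dyadic_term_le_half. Qed.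

Lemma dyadic_terms_inhabited (t : R) : exists v, exists k, v = dyadic_term k t.
Proof. exists (dyadic_term 0 t), 0%nat. reflexivity. Qed.

Definition dnorm (t : R) : R :=
  proj1_sig (completeness _ (dyadic_terms_bound t) (dyadic_terms_inhabited t)).

Lemma dyadic_term_le_dnorm (k : nat) (t : R) : dyadic_term k t <= dnorm t.
Proof.
  unfold dnorm. destruct (completeness _ _ _) as [m [Hub Hlub]]. simpl.
  apply Hub. exists k. reflexivity.
Qed.

Lemma dnorm_le (t B : R) : (forall k, dyadic_term k t <= B) -> dnorm t <= B.
Proof.
  intros HB. unfold dnorm. destruct (completeness _ _ _) as [m [Hub Hlub]]. simpl.
  apply Hlub. intros v [k ->]. apply HB.
Qed.

Lemma dnorm_ge0 (t : R) : 0 <= dnorm t.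
Proof. eapply Rle_trans; [apply (dyadic_term_ge0 0) | apply dyadic_term_le_dnorm]. Qed.

Lemma dnorm_add (s t : R) : dnorm (s + t) <= dnorm s + dnorm t.
Proof.
  apply dnorm_le. intros k. eapply Rle_trans; [apply dyadic_term_add|].
  pose proof (dyadic_term_le_dnorm k s). pose proof (dyadic_term_le_dnorm k t). lra.
Qed.

Lemma dnorm_opp (t : R) : dnorm (- t) = dnorm t.
Proof.
  assert (Hle : forall u, dnorm (- u) <= dnorm u).
  { intros u. apply dnorm_le. intros k. rewrite dyadic_term_opp. apply dyadic_term_le_dnorm. }
  apply Rle_antisym; [apply Hle|]. rewrite <- (Ropp_involutive t) at 1. apply Hle.
Qed.

Lemma dnorm_le_abs (t : R) : dnorm t <= Rabs t.
Proof. apply dnorm_le. intros k. apply dyadic_term_le_abs. Qed.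

Lemma dnorm_0 : dnorm 0 = 0.
Proof.
  apply Rle_antisym; [|apply dnorm_ge0].
  eapply Rle_trans; [apply dnorm_le_abs|]. rewrite Rabs_R0. lra.
Qed.

Lemma dist_Z_le_dnorm (k : nat) (t : R) : dist_Z (t / 2 ^ k) <= 2 ^ k * dnorm t.
Proof.
  pose proof (dyadic_term_le_dnorm k t) as Ht. unfold dyadic_term in Ht.
  pose proof (pow2_pos k).
  replace (dist_Z (t / 2 ^ k)) with (2 ^ k * ((/2) ^ k * dist_Z (t / 2 ^ k))).
  - apply Rmult_le_compat_l; lra.
  - rewrite <- Rmult_assoc, <- Rpow_mult_distr, Rinv_r, pow1 by lra. ring.
Qed.

(* On the scale 2^k, where [t] is still small, the k-th term is [|t| / 4^k]. *)
Lemma dnorm_ge_scaled (k : nat) (t : R) : Rabs t < 2 ^ k / 2 -> (/4) ^ k * Rabs t <= dnorm t.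
Proof.
  intros Ht. pose proof (dyadic_term_le_dnorm k t) as Hk. unfold dyadic_term in Hk.
  pose proof (pow2_pos k).
  assert (Hscaled : Rabs (t / 2 ^ k) = Rabs t * (/2) ^ k).
  { unfold Rdiv. rewrite Rabs_mult, Rabs_inv, (Rabs_right (2 ^ k)), pow_inv by lra. reflexivity. }
  rewrite dist_Z_small, Hscaled in Hk.
  - replace ((/4) ^ k) with ((/2) ^ k * (/2) ^ k)
      by (rewrite <- Rpow_mult_distr; f_equal; field).
    lra.
  - rewrite Hscaled, pow_inv.
    apply Rmult_lt_reg_r with (2 ^ k); [lra|].
    rewrite Rmult_assoc, Rinv_l by lra. lra.
Qed.

Lemma quarter_pow_pos (k : nat) : 0 < (/4) ^ k.
Proof. apply pow_lt; lra. Qed.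

Lemma abs_lt_of_dnorm (t d : R) (k : nat) :
  Rabs t < 2 ^ k / 2 -> dnorm t < (/4) ^ k * d -> Rabs t < d.
Proof.
  intros Ht Hd. pose proof (dnorm_ge_scaled k t Ht). pose proof (quarter_pow_pos k).
  apply Rmult_lt_reg_l with ((/4) ^ k); lra.
Qed.

Lemma dnorm_eq0 (t : R) : dnorm t = 0 -> t = 0.
Proof.
  intros H0. destruct (pow2_unbounded (2 * Rabs t + 1)) as [k Hk].
  pose proof (dnorm_ge_scaled k t ltac:(lra)) as Hk'. rewrite H0 in Hk'.
  pose proof (quarter_pow_pos k). pose proof (Rabs_pos t).
  assert (Rabs t = 0) by nra.
  destruct (Req_dec t 0) as [|Hne]; [assumption|].
  pose proof (Rabs_pos_lt t Hne). lra.
Qed.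

Lemma dnorm_pow2 (m : nat) : dnorm (2 ^ m) <= (/2) ^ m.
Proof.
  apply dnorm_le. intros k. unfold dyadic_term. destruct (le_lt_dec k m) as [Hkm|Hmk].
  - replace (2 ^ m / 2 ^ k) with (IZR (2 ^ Z.of_nat (m - k))).
    + rewrite dist_Z_IZR, Rmult_0_r. left. apply half_pow_pos.
    + rewrite <- pow_IZR. replace m with ((m - k) + k)%nat at 2 by lia.
      rewrite pow_add. field. apply pow_nonzero. lra.
  - pose proof (dist_Z_le_abs (2 ^ m / 2 ^ k)) as Habs.
    pose proof (pow2_pos m). pose proof (pow2_pos k).
    assert (Hq : 0 <= 2 ^ m / 2 ^ k <= 1).
    { split; [apply Rmult_le_pos; [lra | left; apply Rinv_0_lt_compat; lra]|].
      apply Rmult_le_reg_r with (2 ^ k); [lra|].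
      unfold Rdiv. rewrite Rmult_assoc, Rinv_l, Rmult_1_r, Rmult_1_l by lra.
      apply Rle_pow; lia || lra. }
    rewrite Rabs_right in Habs by lra.
    pose proof (half_pow_antimono k m ltac:(lia)). pose proof (half_pow_pos k).
    pose proof (dist_Z_ge0 (2 ^ m / 2 ^ k)). nra.
Qed.

Fixpoint node (n : nat) : R := match n with O => 0 | S n => 4 * node n + 1 end.

Lemma node_ge0 (n : nat) : 0 <= node n.
Proof. induction n; simpl; lra. Qed.

Lemma node_succ (n : nat) : node n + 1 <= node (S n).
Proof. simpl. pose proof (node_ge0 n). lra. Qed.

Lemma node_lt (j n : nat) : (j < n)%nat -> node j + 1 <= node n.
Proof.
  induction 1 as [|m _ IH]; [apply node_succ|]. pose proof (node_succ m). lra.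
Qed.

Lemma node_le (j n : nat) : (j <= n)%nat -> node j <= node n.
Proof.
  intros Hjn. destruct (Nat.eq_dec j n) as [->|Hne]; [lra|].
  pose proof (node_lt j n ltac:(lia)). lra.
Qed.

Lemma node_1 : node 1 = 1.
Proof. simpl. ring. Qed.

Lemma node_integer (n : nat) : exists z, node n = IZR z.
Proof.
  induction n as [|n [z Hz]]; [exists 0%Z; reflexivity|].
  exists (4 * z + 1)%Z. cbn [node]. rewrite Hz, plus_IZR, mult_IZR. reflexivity.
Qed.

Lemma node_closed_form (n : nat) : 3 * node n + 1 = 4 ^ n.
Proof. induction n; simpl; lra. Qed.

Lemma node_add (j m : nat) : node (j + m) = 4 ^ m * node j + node m.
Proof.
  pose proof (node_closed_form (j + m)) as Hjm. rewrite pow_add in Hjm.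
  pose proof (node_closed_form j). pose proof (node_closed_form m). nra.
Qed.

Lemma pow4_pow2 (m : nat) : 4 ^ m = 2 ^ (2 * m).
Proof. rewrite pow_mult. f_equal. lra. Qed.

Section Frame.

Variable P : nat -> Prop.

Definition block (n : nat) (x : R) : Prop :=
  x = node n \/ (exists j, n = S j /\ P j /\ node n <= x <= node n + /2).

Definition frame (x : R) : Prop := exists n, block n x.

Lemma block_range (n : nat) (x : R) : block n x -> node n <= x <= node n + /2.
Proof. intros [->|[j [_ [_ Hx]]]]; lra. Qed.

Lemma block_unique (n n' : nat) (x x' : R) :
  block n x -> block n' x' -> Rabs (x - x') < /2 -> n = n'.
Proof.
  intros Hx Hx' Hd. apply block_range in Hx. apply block_range in Hx'.
  apply Rabs_def2 in Hd.
  destruct (lt_eq_lt_dec n n') as [[Hlt|]|Hlt]; [|assumption|];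
    pose proof (node_lt _ _ Hlt); lra.
Qed.

Lemma frame_0 : frame 0.
Proof. exists 0%nat. left. reflexivity. Qed.

Lemma frame_ge0 (x : R) : frame x -> 0 <= x.
Proof. intros [n Hn]. apply block_range in Hn. pose proof (node_ge0 n). lra. Qed.

Lemma frame_gap (x : R) : frame x -> 0 < x -> 1 <= x.
Proof.
  intros [[|k] Hk] Hx.
  - destruct Hk as [->|[j [Hj _]]]; [simpl in Hx; lra | discriminate].
  - apply block_range in Hk. pose proof (node_le 1 (S k) ltac:(lia)). rewrite node_1 in *. lra.
Qed.

Lemma frame_between_nodes (n : nat) (x : R) :
  frame x -> node (S n) < x < node (S (S n)) -> P n.
Proof.
  intros [k [->|[j [Hj [Pj Hx]]]]] Hn.
  - destruct (le_lt_dec k (S n)) as [Hk|Hk].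
    + pose proof (node_le k (S n) Hk). lra.
    + pose proof (node_le (S (S n)) k ltac:(lia)). lra.
  - destruct (le_lt_dec (S (S n)) k) as [Hk|Hk].
    + pose proof (node_le _ _ Hk). lra.
    + destruct (le_lt_dec k n) as [Hk'|Hk'].
      * pose proof (node_lt k (S n) ltac:(lia)). lra.
      * replace n with j by lia. assumption.
Qed.

Definition left_isolated (x : R) : Prop :=
  frame x /\ exists w, w < x /\ forall y, w < y < x -> ~ frame y.

Lemma node_left_isolated (n : nat) : left_isolated (node n).
Proof.
  split; [exists n; left; reflexivity|].
  exists (node n - /2). split; [lra|]. intros y Hy [k Hk]. apply block_range in Hk.
  destruct (le_lt_dec n k) as [Hnk|Hkn].
  - pose proof (node_le _ _ Hnk). lra.
  - pose proof (node_lt _ _ Hkn). lra.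
Qed.

Lemma left_isolated_node (x : R) : left_isolated x -> exists n, x = node n.
Proof.
  intros [[k [->|[j [Hj [Pj Hx]]]]] [w [Hw Hgap]]]; [eauto|].
  destruct (Req_dec x (node k)) as [E|E]; [eauto|]. exfalso.
  set (y := (Rmax w (node k) + x) / 2).
  pose proof (Rmax_l w (node k)). pose proof (Rmax_r w (node k)).
  assert (Rmax w (node k) < x) by (apply Rmax_lub_lt; lra).
  apply (Hgap y); [unfold y; lra|].
  exists k. right. exists j. unfold y. repeat split; auto; lra.
Qed.

Lemma frame_dists_bound (y : R) : bound (fun v => exists z, frame z /\ v = - dnorm (y - z)).
Proof. exists 0. intros v [z [_ ->]]. pose proof (dnorm_ge0 (y - z)). lra. Qed.

Lemma frame_dists_inhabited (y : R) : exists v, exists z, frame z /\ v = - dnorm (y - z).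
Proof. exists (- dnorm (y - 0)), 0. split; [apply frame_0 | reflexivity]. Qed.

(* The infimum of [dnorm (y - z)] over the frame, written as minus a supremum. *)
Definition frame_dist (y : R) : R :=
  - proj1_sig (completeness _ (frame_dists_bound y) (frame_dists_inhabited y)).

Lemma frame_dist_le (y z : R) : frame z -> frame_dist y <= dnorm (y - z).
Proof.
  intros Hz. unfold frame_dist. destruct (completeness _ _ _) as [m [Hub Hlub]]. simpl.
  assert (- dnorm (y - z) <= m) by (apply Hub; exists z; auto). lra.
Qed.

Lemma frame_dist_ge (y B : R) : (forall z, frame z -> B <= dnorm (y - z)) -> B <= frame_dist y.
Proof.
  intros HB. unfold frame_dist. destruct (completeness _ _ _) as [m [Hub Hlub]]. simpl.
  assert (m <= - B); [|lra].
  apply Hlub. intros v [z [Hz ->]]. pose proof (HB z Hz). lra.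
Qed.

Lemma frame_dist_ge0 (y : R) : 0 <= frame_dist y.
Proof. apply frame_dist_ge. intros. apply dnorm_ge0. Qed.

Lemma frame_dist_lipschitz (u v : R) : Rabs (frame_dist u - frame_dist v) <= dnorm (u - v).
Proof.
  assert (Hlip : forall u v, frame_dist u <= frame_dist v + dnorm (u - v)).
  { intros s t. assert (frame_dist s - dnorm (s - t) <= frame_dist t); [|lra].
    apply frame_dist_ge. intros z Hz. pose proof (frame_dist_le s z Hz).
    pose proof (dnorm_add (s - t) (t - z)). replace (s - t + (t - z)) with (s - z) in *; lra. }
  pose proof (Hlip u v). pose proof (Hlip v u).
  rewrite <- dnorm_opp in H0. replace (- (v - u)) with (u - v) in H0 by ring.
  apply Rabs_le. lra.
Qed.

Lemma frame_dist_frame (z : R) : frame z -> frame_dist z = 0.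
Proof.
  intros Hz. apply Rle_antisym; [|apply frame_dist_ge0].
  pose proof (frame_dist_le z z Hz). rewrite Rminus_diag, dnorm_0 in *. assumption.
Qed.

Lemma frame_dist_attained (y e : R) : frame_dist y < e -> exists z, frame z /\ dnorm (y - z) < e.
Proof.
  intros He. apply NNPP. intros Hno. assert (e <= frame_dist y); [|lra].
  apply frame_dist_ge. intros z Hz. apply Rnot_lt_le. intros Hlt. apply Hno. eauto.
Qed.

(* A point [x] is [dnorm]-close to a block far beyond it only if [x - z] is close
   to a multiple of [4^m]; but [node n = 4^m node (n-m) + node m] shows [x - z]
   lies strictly between two consecutive multiples, at distance > 4^m/8. *)
Lemma far_block_not_close (x z : R) (m n : nat) :
  (m <= n)%nat -> block n z -> 10 * (Rabs x + 2) < 4 ^ m -> /8 <= dist_Z ((x - z) / 4 ^ m).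
Proof.
  intros Hmn Hz Hm. apply Rnot_lt_le. intros HD. apply block_range in Hz.
  set (u := z - node n). assert (Hu : 0 <= u <= /2) by (unfold u; lra).
  pose proof (node_add (n - m) m) as Hs. replace (n - m + m)%nat with n in Hs by lia.
  destruct (node_integer (n - m)) as [k Hk]. rewrite Hk in Hs.
  set (p := 4 ^ m) in *. assert (Hp : 0 < p) by (unfold p; apply pow_lt; lra).
  set (w := (x - u - node m) / p).
  assert (Hw : (x - z) / p = w + IZR (- k)) by (unfold w, u; rewrite opp_IZR, Hs; field; lra).
  rewrite Hw, dist_Z_shift in HD. unfold dist_Z in HD. set (M := nearest_int w) in HD.
  apply Rabs_def2 in HD. destruct HD as [HD1 HD2].
  assert (Hwp : w * p = x - u - node m) by (unfold w; field; lra).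
  assert ((w - IZR M) * p < /8 * p) by (apply Rmult_lt_compat_r; lra).
  assert (- /8 * p < (w - IZR M) * p) by (apply Rmult_lt_compat_r; lra).
  pose proof (node_closed_form m) as Hnode. fold p in Hnode.
  pose proof (Rle_abs x). pose proof (Rle_abs (- x)). rewrite Rabs_Ropp in *.
  destruct (Z_le_gt_dec 0 M) as [HM|HM].
  - assert (0 <= IZR M) by (apply IZR_le; lia).
    assert (0 <= IZR M * p) by (apply Rmult_le_pos; lra). nra.
  - assert (IZR M <= -1) by (apply IZR_le; lia).
    assert (IZR M * p <= - p) by nra. nra.
Qed.

Lemma dist_Z_lt_of_dnorm (t : R) (k : nat) : dnorm t < /8 * (/2) ^ k -> dist_Z (t / 2 ^ k) < /8.
Proof.
  intros Ht. pose proof (dist_Z_le_dnorm k t). pose proof (pow2_pos k).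
  assert (2 ^ k * dnorm t < 2 ^ k * (/8 * (/2) ^ k)) by (apply Rmult_lt_compat_l; lra).
  replace (2 ^ k * (/8 * (/2) ^ k)) with (/8 * (2 * /2) ^ k) in *
    by (rewrite Rpow_mult_distr; ring).
  rewrite Rinv_r, pow1 in * by lra. lra.
Qed.

Lemma frame_dist_zero_approx (x : R) : frame_dist x = 0 ->
  forall d, 0 < d -> exists z, frame z /\ Rabs (x - z) < d.
Proof.
  intros Hx d Hd.
  destruct (pow2_unbounded (10 * (Rabs x + 2))) as [m Hm].
  assert (Hm4 : 10 * (Rabs x + 2) < 4 ^ m).
  { rewrite pow4_pow2. eapply Rlt_le_trans; [apply Hm | apply Rle_pow; lia || lra]. }
  destruct (pow2_unbounded (2 * (Rabs x + node m + 1))) as [k Hk].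
  set (e := Rmin (/8 * (/2) ^ (2 * m)) ((/4) ^ k * d)).
  assert (He : 0 < e).
  { apply Rmin_pos; [pose proof (half_pow_pos (2 * m)); lra|].
    pose proof (quarter_pow_pos k). nra. }
  destruct (frame_dist_attained x e ltac:(lra)) as [z [[n Hz] Hxz]].
  exists z. split; [exists n; exact Hz|].
  destruct (le_lt_dec m n) as [Hmn|Hnm].
  - exfalso. pose proof (far_block_not_close x z m n Hmn Hz Hm4). rewrite pow4_pow2 in *.
    assert (dist_Z ((x - z) / 2 ^ (2 * m)) < /8); [|lra].
    apply dist_Z_lt_of_dnorm. eapply Rlt_le_trans; [apply Hxz | apply Rmin_l].
  - apply block_range in Hz. pose proof (node_lt _ _ Hnm). pose proof (node_ge0 n).
    apply (abs_lt_of_dnorm _ _ k).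
    + pose proof (Rle_abs x). pose proof (Rle_abs (- x)). rewrite Rabs_Ropp in *.
      apply Rabs_def1; lra.
    + eapply Rlt_le_trans; [apply Hxz | apply Rmin_r].
Qed.

Lemma frame_closed (x : R) : frame_dist x = 0 -> frame x.
Proof.
  intros Hx. pose proof (frame_dist_zero_approx x Hx) as Happrox.
  destruct (Happrox (/4) ltac:(lra)) as [z0 [[n0 Hz0] Hxz0]].
  assert (Hnear : forall d, 0 < d -> exists z, block n0 z /\ Rabs (x - z) < d).
  { intros d Hd.
    destruct (Happrox (Rmin d (/4)) (Rmin_pos d (/4) Hd ltac:(lra))) as [z [[n Hz] Hxz]].
    pose proof (Rmin_l d (/4)). pose proof (Rmin_r d (/4)).
    replace n0 with n; [exists z; split; [assumption | lra]|].
    apply (block_unique n n0 z z0 Hz Hz0).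
    replace (z - z0) with (- (x - z) + (x - z0)) by ring.
    eapply Rle_lt_trans; [apply Rabs_triang|]. rewrite Rabs_Ropp. lra. }
  exists n0. destruct (classic (exists j, n0 = S j /\ P j)) as [[j [Hj Pj]]|Hno].
  - right. exists j. do 2 (split; [assumption|]).
    split; apply Rnot_lt_le; intros Hout.
    + destruct (Hnear (node n0 - x) ltac:(lra)) as [z [Hz Hxz]].
      apply block_range in Hz. apply Rabs_def2 in Hxz. lra.
    + destruct (Hnear (x - (node n0 + /2)) ltac:(lra)) as [z [Hz Hxz]].
      apply block_range in Hz. apply Rabs_def2 in Hxz. lra.
  - left. apply NNPP. intros Hne.
    destruct (Hnear (Rabs (x - node n0)) ltac:(apply Rabs_pos_lt; lra)) as [z [Hz Hxz]].
    destruct Hz as [->|[j [Hj [Pj _]]]]; [lra | eauto].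
Qed.

End Frame.

Definition metric_top (d : R -> R -> R) : topology_on_R :=
  fun U => forall x, U x -> exists e, 0 < e /\ forall y, d x y < e -> U y.

Lemma metric_top_topology (d : R -> R -> R) : is_topology (metric_top d).
Proof.
  split; [|split; [|split]].
  - intros x [].
  - intros x _. exists 1. split; [lra | auto].
  - intros U V HU HV x [Ux Vx].
    destruct (HU x Ux) as [e1 [He1 H1]], (HV x Vx) as [e2 [He2 H2]].
    exists (Rmin e1 e2). split; [apply Rmin_pos; assumption|].
    intros y Hy. pose proof (Rmin_l e1 e2). pose proof (Rmin_r e1 e2).
    split; [apply H1 | apply H2]; lra.
  - intros F HF x [U [FU Ux]]. destruct (HF U FU x Ux) as [e [He H]].
    exists e. split; [assumption|]. intros y Hy. exists U. auto.
Qed.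

Lemma metric_top_metrizable (d : R -> R -> R) : is_metric d -> metrizable (metric_top d).
Proof. intros Hd. exists d. split; [assumption | reflexivity]. Qed.

Lemma metric_top_coarser (d : R -> R -> R) (C : R) :
  0 < C -> (forall x y, d x y <= C * Rabs (x - y)) -> coarser (metric_top d) eta.
Proof.
  intros HC Hd U HU x Ux. destruct (HU x Ux) as [e [He Hball]].
  assert (Hpos : 0 < e / C) by (apply Rdiv_lt_0_compat; assumption).
  exists (mkposreal _ Hpos). intros y Hy. unfold disc in Hy. simpl in Hy.
  apply Hball. rewrite Rabs_minus_sym in Hy. eapply Rle_lt_trans; [apply Hd|].
  apply Rmult_lt_reg_l with (/ C); [apply Rinv_0_lt_compat; assumption|].
  rewrite <- Rmult_assoc, Rinv_l, Rmult_1_l by lra. lra.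
Qed.

Section MetricTopology.

Variable d : R -> R -> R.
Hypothesis d_metric : is_metric d.

Lemma metric_refl (x : R) : d x x = 0.
Proof. apply d_metric. reflexivity. Qed.

Lemma metric_ball_open (x r : R) : metric_top d (fun y => d x y < r).
Proof.
  destruct d_metric as [_ [_ [_ Htri]]].
  intros y Hy. exists (r - d x y). split; [lra|].
  intros z Hz. pose proof (Htri x y z). lra.
Qed.

Lemma metric_top_hausdorff : hausdorff (metric_top d).
Proof.
  destruct d_metric as [Hge0 [Heq0 [Hsym Htri]]].
  intros x y Hxy. set (r := d x y / 2).
  assert (0 < d x y).
  { destruct (Hge0 x y) as [|E]; [assumption|]. exfalso. apply Hxy, Heq0. auto. }
  exists (fun z => d x z < r), (fun z => d y z < r).
  do 2 (split; [apply metric_ball_open|]). rewrite !metric_refl. unfold r.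
  split; [lra|]. split; [lra|].
  intros z [Hxz Hyz]. pose proof (Htri x z y). rewrite (Hsym z y) in *. lra.
Qed.

End MetricTopology.

Lemma metric_continuous (d d' : R -> R -> R) (h : R -> R) :
  is_metric d' -> continuous_between (metric_top d) (metric_top d') h ->
  forall x e, 0 < e -> exists r, 0 < r /\ forall y, d x y < r -> d' (h x) (h y) < e.
Proof.
  intros Hd' Hh x e He.
  apply (Hh _ (metric_ball_open d' Hd' (h x) e) x). simpl.
  rewrite metric_refl by assumption. exact He.
Qed.

Lemma Rmin0_lipschitz (x y : R) : Rabs (Rmin x 0 - Rmin y 0) <= Rabs (x - y).
Proof.
  unfold Rmin. destruct (Rle_dec x 0), (Rle_dec y 0); apply Rabs_le;
    pose proof (Rle_abs (x - y)); pose proof (Rle_abs (- (x - y)));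
    rewrite Rabs_Ropp in *; lra.
Qed.

Definition beyond (up : bool) (M y : R) : Prop := if up then M <= y else y <= M.

Section Topology.

Variable P : nat -> Prop.

Definition neg_frame_dist (x : R) : R := frame_dist P (Rmin x 0).

Definition frame_metric (x y : R) : R := dnorm (x - y) + Rabs (neg_frame_dist x - neg_frame_dist y).

Definition frame_top : topology_on_R := metric_top frame_metric.

Lemma dnorm_le_frame_metric (x y : R) : dnorm (x - y) <= frame_metric x y.
Proof. unfold frame_metric. pose proof (Rabs_pos (neg_frame_dist x - neg_frame_dist y)). lra. Qed.

Lemma frame_metric_le_abs (x y : R) : frame_metric x y <= 2 * Rabs (x - y).
Proof.
  unfold frame_metric, neg_frame_dist. pose proof (dnorm_le_abs (x - y)).
  pose proof (frame_dist_lipschitz P (Rmin x 0) (Rmin y 0)).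
  pose proof (dnorm_le_abs (Rmin x 0 - Rmin y 0)). pose proof (Rmin0_lipschitz x y). lra.
Qed.

Lemma frame_metric_is_metric : is_metric frame_metric.
Proof.
  unfold frame_metric. set (psi := neg_frame_dist). split; [|split; [|split]].
  - intros x y. pose proof (dnorm_ge0 (x - y)). pose proof (Rabs_pos (psi x - psi y)). lra.
  - intros x y. split.
    + intros H0. pose proof (dnorm_ge0 (x - y)). pose proof (Rabs_pos (psi x - psi y)).
      assert (Hxy : x - y = 0) by (apply dnorm_eq0; lra). lra.
    + intros ->. rewrite !Rminus_diag, dnorm_0, Rabs_R0. ring.
  - intros x y. rewrite <- dnorm_opp, Rabs_minus_sym. do 2 f_equal. ring.
  - intros x y z. pose proof (dnorm_add (x - y) (y - z)).
    pose proof (Rabs_triang (psi x - psi y) (psi y - psi z)).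
    replace (x - y + (y - z)) with (x - z) in * by ring.
    replace (psi x - psi y + (psi y - psi z)) with (psi x - psi z) in * by ring.
    lra.
Qed.

Lemma frame_top_in_L : in_L frame_top.
Proof.
  split; [apply metric_top_topology|]. split; [apply metric_top_hausdorff, frame_metric_is_metric|].
  apply (metric_top_coarser _ 2); [lra | apply frame_metric_le_abs].
Qed.

Lemma neg_frame_dist_pos (x : R) : 0 <= x -> neg_frame_dist x = 0.
Proof.
  intros Hx. unfold neg_frame_dist. rewrite Rmin_right by lra. apply frame_dist_frame, frame_0.
Qed.

Lemma neg_frame_dist_neg (x : R) : x <= 0 -> neg_frame_dist x = frame_dist P x.
Proof. intros Hx. unfold neg_frame_dist. rewrite Rmin_left by lra. reflexivity. Qed.

Lemma frame_metric_shift_up (x : R) (m : nat) : 0 <= x -> frame_metric x (x + 2 ^ m) <= (/2) ^ m.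
Proof.
  intros Hx. pose proof (pow2_pos m). unfold frame_metric.
  rewrite !neg_frame_dist_pos by lra. rewrite Rminus_diag, Rabs_R0.
  replace (x - (x + 2 ^ m)) with (- 2 ^ m) by ring. rewrite dnorm_opp.
  pose proof (dnorm_pow2 m). lra.
Qed.

(* On the frame [neg_frame_dist] vanishes just as [frame_dist] does, so in both
   cases its variation is bounded by the Lipschitz estimate for [frame_dist]. *)
Lemma frame_metric_shift_down (x : R) (m : nat) :
  x <= 0 \/ frame P x -> frame_metric x (x - 2 ^ m) <= 2 * (/2) ^ m.
Proof.
  intros Hx. pose proof (pow2_pos m). pose proof (half_pow_pos m). pose proof (dnorm_pow2 m).
  assert (Hfd : Rabs (neg_frame_dist x - neg_frame_dist (x - 2 ^ m)) <= dnorm (2 ^ m)).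
  { replace (2 ^ m) with (x - (x - 2 ^ m)) at 2 by ring.
    destruct Hx as [Hx|Hx].
    - rewrite !neg_frame_dist_neg by lra. apply frame_dist_lipschitz.
    - pose proof (frame_ge0 P x Hx). rewrite neg_frame_dist_pos by lra.
      destruct (Rle_dec (x - 2 ^ m) 0) as [Hle|Hgt].
      + rewrite neg_frame_dist_neg, <- (frame_dist_frame P x Hx) by lra.
        apply frame_dist_lipschitz.
      + rewrite neg_frame_dist_pos, Rminus_diag, Rabs_R0 by lra. apply dnorm_ge0. }
  unfold frame_metric. replace (x - (x - 2 ^ m)) with (2 ^ m) by ring. lra.
Qed.

Definition escapes (up : bool) (x : R) : Prop :=
  forall M e, 0 < e -> exists y, beyond up M y /\ frame_metric x y < e.

Lemma escapes_up_iff (x : R) : escapes true x <-> 0 <= x.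
Proof.
  split.
  - intros Hesc. apply Rnot_lt_le. intros Hx.
    assert (Hframe : frame P x).
    { apply frame_closed. apply Rle_antisym; [|apply frame_dist_ge0].
      apply le_epsilon. intros e He. destruct (Hesc 0 e He) as [y [Hy Hxy]].
      simpl in Hy. unfold frame_metric in Hxy.
      rewrite neg_frame_dist_neg, neg_frame_dist_pos in Hxy by lra.
      pose proof (dnorm_ge0 (x - y)). pose proof (Rle_abs (frame_dist P x - 0)). lra. }
    pose proof (frame_ge0 P x Hframe). lra.
  - intros Hx M e He.
    destruct (pow2_large_and_half_pow_small e (Rabs M + Rabs x) He) as [m [Hm1 Hm2]].
    exists (x + 2 ^ m). split.
    + simpl. pose proof (Rle_abs M). pose proof (Rle_abs (- x)). rewrite Rabs_Ropp in *. lra.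
    + pose proof (frame_metric_shift_up x m Hx). lra.
Qed.

Lemma escapes_down_iff (x : R) : escapes false x <-> x <= 0 \/ frame P x.
Proof.
  split.
  - intros Hesc. destruct (Rle_dec x 0) as [|Hx]; [left; assumption|]. right.
    apply frame_closed. apply Rle_antisym; [|apply frame_dist_ge0].
    apply le_epsilon. intros e He. destruct (Hesc 0 e He) as [y [Hy Hxy]].
    simpl in Hy. unfold frame_metric in Hxy.
    rewrite neg_frame_dist_pos, neg_frame_dist_neg in Hxy by lra.
    pose proof (frame_dist_lipschitz P x y). pose proof (dnorm_ge0 (x - y)).
    pose proof (frame_dist_ge0 P x). rewrite Rabs_minus_sym, Rminus_0_r in Hxy.
    pose proof (Rle_abs (frame_dist P y)).
    pose proof (Rle_abs (frame_dist P x - frame_dist P y)). lra.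
  - intros Hx M e He.
    destruct (pow2_large_and_half_pow_small (e / 2) (Rabs M + Rabs x) ltac:(lra)) as [m [Hm1 Hm2]].
    exists (x - 2 ^ m). split.
    + simpl. pose proof (Rle_abs (- M)). pose proof (Rle_abs x). rewrite Rabs_Ropp in *. lra.
    + pose proof (frame_metric_shift_down x m Hx). lra.
Qed.

Lemma frame_metric_far_point (x e c : R) : 0 < e -> exists y, frame_metric x y < e /\ c <= Rabs y.
Proof.
  intros He.
  destruct (pow2_large_and_half_pow_small (e / 2) (Rabs x + Rabs c) ltac:(lra)) as [m [Hm1 Hm2]].
  pose proof (pow2_pos m). pose proof (Rle_abs c).
  destruct (Rle_dec 0 x) as [Hx|Hx].
  - exists (x + 2 ^ m). pose proof (frame_metric_shift_up x m Hx).
    rewrite Rabs_right in * by lra. split; lra.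
  - exists (x - 2 ^ m). pose proof (frame_metric_shift_down x m ltac:(left; lra)).
    rewrite Rabs_left in * by lra. split; lra.
Qed.

Lemma frame_metric_bounded_away (y c : R) :
  c + 1 <= Rabs y -> exists r, 0 < r /\ forall w, Rabs w <= c -> r <= frame_metric y w.
Proof.
  intros Hy. destruct (pow2_unbounded (2 * (Rabs y + c + 1))) as [k Hk].
  exists ((/4) ^ k). split; [apply quarter_pow_pos|]. intros w Hw.
  pose proof (Rabs_triang_inv y w). pose proof (Rabs_triang y (- w)). rewrite Rabs_Ropp in *.
  pose proof (dnorm_ge_scaled k (y - w) ltac:(unfold Rminus; lra)).
  pose proof (dnorm_le_frame_metric y w). pose proof (quarter_pow_pos k). nra.
Qed.

Lemma bounded_nowhere_dense (c : R) : nowhere_dense frame_top (fun x => Rabs x <= c).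
Proof.
  intros U HU Hdense x Ux. destruct (HU x Ux) as [e [He Hball]].
  destruct (frame_metric_far_point x e (c + 1) He) as [y [Hxy Hy]].
  destruct (frame_metric_bounded_away y c Hy) as [r [Hr Haway]].
  destruct (Hdense y (Hball y Hxy) _ (metric_ball_open _ frame_metric_is_metric y r))
    as [w [Hyw Hw]].
  - rewrite metric_refl by apply frame_metric_is_metric. assumption.
  - pose proof (Haway w Hw). lra.
Qed.

Lemma frame_top_first_category : first_category frame_top.
Proof.
  exists (fun n x => Rabs x <= INR n). split; [intros n; apply bounded_nowhere_dense|].
  intros x. destruct (INR_unbounded (Rabs x)) as [n Hn]. exists n. lra.
Qed.

End Topology.

Lemma continuity_pt_ball (phi : R -> R) (s : R) : continuity_pt phi s ->
  forall e, 0 < e -> exists r, 0 < r /\ forall u, Rabs (u - s) < r -> Rabs (phi u - phi s) < e.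
Proof.
  intros Hphi e He. destruct (Hphi e He) as [r [Hr Hball]]. exists r. split; [lra|].
  intros u Hu. destruct (Req_dec u s) as [->|Hne].
  - rewrite Rminus_diag, Rabs_R0. assumption.
  - apply (Hball u). split; [split; [exact I | auto] | exact Hu].
Qed.

Definition dnorm_continuous (h : R -> R) : Prop :=
  forall s e, 0 < e -> exists r, 0 < r /\ forall u, Rabs (u - s) < r -> dnorm (h u - h s) < e.

Lemma frame_top_continuous_dnorm_continuous (P Q : nat -> Prop) (h : R -> R) :
  continuous_between (frame_top P) (frame_top Q) h -> dnorm_continuous h.
Proof.
  intros Hh s e He.
  destruct (metric_continuous _ _ h (frame_metric_is_metric Q) Hh s e He) as [r [Hr Hball]].
  exists (r / 2). split; [lra|]. intros u Hu.
  pose proof (frame_metric_le_abs P s u). rewrite Rabs_minus_sym in Hu.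
  pose proof (Hball u ltac:(lra)). pose proof (dnorm_le_frame_metric Q (h s) (h u)).
  rewrite <- dnorm_opp. replace (- (h u - h s)) with (h s - h u) by ring. lra.
Qed.

Lemma dist_Z_scaled_continuous (h : R -> R) (c : R) (J : nat) :
  dnorm_continuous h -> continuity (fun u => dist_Z ((h u - c) / 2 ^ J)).
Proof.
  intros Hh s e He. pose proof (pow2_pos J).
  destruct (Hh s (e / 2 ^ J) ltac:(apply Rdiv_lt_0_compat; lra)) as [r [Hr Hball]].
  exists r. split; [lra|]. intros u [_ Hu]. simpl in *. unfold R_dist in *.
  eapply Rle_lt_trans; [apply dist_Z_lipschitz|].
  replace ((h u - c) / 2 ^ J - (h s - c) / 2 ^ J) with ((h u - h s) / 2 ^ J) by (field; lra).
  eapply Rle_lt_trans; [apply dist_Z_le_dnorm|].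
  specialize (Hball u Hu). apply Rmult_lt_reg_r with (/ 2 ^ J); [apply Rinv_0_lt_compat; lra|].
  replace (2 ^ J * dnorm (h u - h s) * / 2 ^ J) with (dnorm (h u - h s)) by (field; lra).
  exact Hball.
Qed.

(* If [dist_Z t] is small, then at every dyadic scale [dist_Z (t / 2^J)] is either
   small or large, according as the integer nearest to [t] is divisible by [2^J]. *)
Lemma dist_Z_dichotomy (t eps : R) (J : nat) : dist_Z t < eps -> eps <= /4 ->
  dist_Z (t / 2 ^ J) < eps / 2 ^ J \/ (1 - eps) / 2 ^ J <= dist_Z (t / 2 ^ J).
Proof.
  intros Ht Heps. pose proof (pow2_pos J) as HJ.
  set (n := nearest_int t). set (k := nearest_int (IZR n / 2 ^ J)).
  assert (Hrem : dist_Z ((t - IZR n) / 2 ^ J) < eps / 2 ^ J).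
  { eapply Rle_lt_trans; [apply dist_Z_le_abs|].
    unfold Rdiv. rewrite Rabs_mult, Rabs_inv, (Rabs_right (2 ^ J)) by lra.
    apply Rmult_lt_compat_r; [apply Rinv_0_lt_compat; lra | exact Ht]. }
  destruct (Z.eq_dec (n - 2 ^ Z.of_nat J * k) 0) as [E|E].
  - left. assert (Hn : IZR n = 2 ^ J * IZR k).
    { apply (f_equal IZR) in E. rewrite minus_IZR, mult_IZR, <- pow_IZR in E. lra. }
    replace (t / 2 ^ J) with ((t - IZR n) / 2 ^ J + IZR k) by (rewrite Hn; field; lra).
    rewrite dist_Z_shift. exact Hrem.
  - right. pose proof (IZR_abs_ge1 _ E) as Hge. rewrite minus_IZR, mult_IZR, <- pow_IZR in Hge.
    assert (Hn : / 2 ^ J <= dist_Z (IZR n / 2 ^ J)).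
    { unfold dist_Z. fold k.
      replace (IZR n / 2 ^ J - IZR k) with ((IZR n - 2 ^ J * IZR k) / 2 ^ J) by (field; lra).
      unfold Rdiv. rewrite Rabs_mult, Rabs_inv, (Rabs_right (2 ^ J)) by lra.
      rewrite <- (Rmult_1_l (/ 2 ^ J)) at 1.
      apply Rmult_le_compat_r; [left; apply Rinv_0_lt_compat; lra | exact Hge]. }
    pose proof (dist_Z_lipschitz (IZR n / 2 ^ J) (t / 2 ^ J)) as Hlip.
    replace (IZR n / 2 ^ J - t / 2 ^ J) with (- ((t - IZR n) / 2 ^ J)) in Hlip by (field; lra).
    rewrite dist_Z_opp in Hlip. pose proof (Rle_abs (dist_Z (IZR n / 2 ^ J) - dist_Z (t / 2 ^ J))).
    unfold Rdiv in *. lra.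
Qed.

(* By the intermediate value theorem at level [a]. *)
Lemma continuous_gap (phi : R -> R) (s0 r a b : R) :
  continuity phi -> a < b -> (forall u, Rabs (u - s0) < r -> phi u < a \/ b <= phi u) ->
  phi s0 < a -> forall s, Rabs (s - s0) < r -> phi s < a.
Proof.
  intros Hphi Hab Hgap Hs0 s Hs. destruct (Hgap s Hs) as [|Hb]; [assumption|]. exfalso.
  assert (Hshift : continuity (fun u => phi u - a)).
  { apply continuity_minus; [assumption | apply continuity_const; intros ? ?; reflexivity]. }
  assert (Hz : exists z, Rabs (z - s0) < r /\ phi z = a).
  { destruct (Rle_dec s0 s) as [Hle|Hgt].
    - destruct (IVT_cor _ s0 s Hshift Hle ltac:(nra)) as [z [Hz Hz0]].
      exists z. rewrite Rabs_right in * by lra. split; lra.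
    - destruct (IVT_cor _ s s0 Hshift ltac:(lra) ltac:(nra)) as [z [Hz Hz0]].
      exists z. rewrite Rabs_left1 in * by lra. split; lra. }
  destruct Hz as [z [Hz Hza]]. destruct (Hgap z Hz); lra.
Qed.

Lemma continuity_pt_of_ball (phi : R -> R) (s : R) :
  (forall e, 0 < e -> exists r, 0 < r /\ forall u, Rabs (u - s) < r -> Rabs (phi u - phi s) < e) ->
  continuity_pt phi s.
Proof.
  intros Hball e He. destruct (Hball e He) as [r [Hr Hu]]. exists r. split; [lra|].
  intros u [_ Hus]. apply Hu. exact Hus.
Qed.

Lemma dist_Z_scaled_zero (x : R) (J : nat) : dist_Z ((x - x) / 2 ^ J) = 0.
Proof. rewrite Rminus_diag. unfold Rdiv. rewrite Rmult_0_l. apply (dist_Z_IZR 0). Qed.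

(* Every scale [2^J] is handled at once: on a Euclidean ball the continuous map
   [u |-> dist_Z ((h u - h s0) / 2^J)] starts at [0] and can never enter the gap of
   [dist_Z_dichotomy], so it stays below [e / 2^J]; for [J] large this bounds
   [|h u - h s0|] itself. *)
Lemma dnorm_continuous_continuity (h : R -> R) : dnorm_continuous h -> continuity h.
Proof.
  intros Hh s0. apply continuity_pt_of_ball. intros eps Heps.
  pose proof (Rmin_l eps (/4)). pose proof (Rmin_r eps (/4)). set (e := Rmin eps (/4)) in *.
  assert (He : 0 < e) by (apply Rmin_pos; lra).
  set (phi := fun J u => dist_Z ((h u - h s0) / 2 ^ J)).
  assert (Hphi0 : forall J, phi J s0 = 0) by (intros J; apply dist_Z_scaled_zero).
  destruct (continuity_pt_ball (phi 0%nat) s0 (dist_Z_scaled_continuous h (h s0) 0 Hh s0) e He)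
    as [r [Hr Hball]].
  assert (Hnear : forall u, Rabs (u - s0) < r -> dist_Z (h u - h s0) < e).
  { intros u Hu. specialize (Hball u Hu). unfold phi in Hball. rewrite dist_Z_scaled_zero in Hball.
    simpl in Hball. rewrite Rdiv_1_r, Rminus_0_r, Rabs_right in Hball by apply Rle_ge, dist_Z_ge0.
    exact Hball. }
  exists r. split; [assumption|]. intros s Hs.
  assert (Hscales : forall J, dist_Z ((h s - h s0) / 2 ^ J) < e / 2 ^ J).
  { intros J. pose proof (pow2_pos J).
    apply (continuous_gap (phi J) s0 r (e / 2 ^ J) ((1 - e) / 2 ^ J)); try assumption.
    - apply dist_Z_scaled_continuous. assumption.
    - apply Rmult_lt_compat_r; [apply Rinv_0_lt_compat|]; lra.
    - intros u Hu. apply dist_Z_dichotomy; [apply Hnear|]; assumption.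
    - rewrite Hphi0. apply Rdiv_lt_0_compat; assumption. }
  destruct (pow2_unbounded (2 * Rabs (h s - h s0) + 1)) as [J HJ].
  specialize (Hscales J). pose proof (pow2_pos J).
  assert (Habs : Rabs ((h s - h s0) / 2 ^ J) = Rabs (h s - h s0) / 2 ^ J).
  { unfold Rdiv. rewrite Rabs_mult, Rabs_inv, (Rabs_right (2 ^ J)) by lra. reflexivity. }
  rewrite dist_Z_small, Habs in Hscales.
  - unfold Rdiv in Hscales. apply Rmult_lt_reg_r in Hscales; [lra|].
    apply Rinv_0_lt_compat. lra.
  - rewrite Habs. apply Rmult_lt_reg_r with (2 ^ J); [lra|].
    unfold Rdiv. rewrite Rmult_assoc, Rinv_l by lra. lra.
Qed.

Lemma continuous_injective_between (h : R -> R) :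
  continuity h -> (forall x y, h x = h y -> x = y) ->
  forall a b c, a < b < c -> h a < h c -> h a < h b < h c.
Proof.
  intros Hh Hinj a b c Hb Hac.
  assert (Hshift : forall v, continuity (fun x => h x - v)).
  { intros v. apply continuity_minus; [assumption|].
    apply continuity_const. intros ? ?. reflexivity. }
  split.
  - apply Rnot_le_lt. intros [Hlt|Heq]; [|apply Hinj in Heq; lra].
    destruct (IVT_cor _ b c (Hshift (h a)) ltac:(lra) ltac:(nra)) as [z [Hz Hz0]].
    assert (Hza : z = a) by (apply Hinj; lra). lra.
  - apply Rnot_le_lt. intros [Hlt|Heq]; [|apply Hinj in Heq; lra].
    destruct (IVT_cor _ a b (Hshift (h c)) ltac:(lra) ltac:(nra)) as [z [Hz Hz0]].
    assert (Hzc : z = c) by (apply Hinj; lra). lra.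
Qed.

Lemma continuous_injective_triple (h : R -> R) :
  continuity h -> (forall x y, h x = h y -> x = y) ->
  forall a b c, a < b < c -> (h a < h b < h c) \/ (h c < h b < h a).
Proof.
  intros Hh Hinj a b c Hb. destruct (Rtotal_order (h a) (h c)) as [Hac|[Heq|Hca]].
  - left. apply continuous_injective_between; assumption.
  - apply Hinj in Heq. lra.
  - right. assert (Hopp : - h a < - h b < - h c).
    { apply (continuous_injective_between (fun x => - h x)); try lra.
      - apply continuity_opp. assumption.
      - intros x y E. apply Hinj. lra. }
    lra.
Qed.

Lemma continuous_injective_increasing (h : R -> R) :
  continuity h -> (forall x y, h x = h y -> x = y) -> h 0 < h 1 -> strict_increasing h.
Proof.
  intros Hh Hinj H01 x y Hxy. pose proof (continuous_injective_triple h Hh Hinj) as Htri.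
  set (m := Rmin x 0 - 1). pose proof (Rmin_l x 0). pose proof (Rmin_r x 0).
  assert (Hm1 : h m < h 1) by (destruct (Htri m 0 1 ltac:(unfold m; lra)); lra).
  assert (Hmy : h m < h y).
  { destruct (Rtotal_order y 1) as [Hy|[->|Hy]]; [| assumption |].
    - destruct (Htri m y 1 ltac:(unfold m; lra)); lra.
    - destruct (Htri m 1 y ltac:(unfold m; lra)); lra. }
  destruct (Htri m x y ltac:(unfold m; lra)); lra.
Qed.

Lemma continuous_injective_monotone (h : R -> R) :
  continuity h -> (forall x y, h x = h y -> x = y) -> strict_increasing h \/ strict_decreasing h.
Proof.
  intros Hh Hinj. destruct (Rtotal_order (h 0) (h 1)) as [H01|[Heq|H10]].
  - left. apply continuous_injective_increasing; assumption.
  - apply Hinj in Heq. lra.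
  - right. intros x y Hxy.
    assert (Hopp : strict_increasing (fun x => - h x)).
    { apply continuous_injective_increasing; [apply continuity_opp; assumption | | lra].
      intros u v E. apply Hinj. lra. }
    pose proof (Hopp x y Hxy). lra.
Qed.

Lemma strict_increasing_inverse (h g : R -> R) :
  (forall y, h (g y) = y) -> strict_increasing h -> strict_increasing g.
Proof.
  intros hg Hh x y Hxy. apply Rnot_le_lt. intros [Hlt|Heq].
  - apply Hh in Hlt. rewrite !hg in Hlt. lra.
  - apply (f_equal h) in Heq. rewrite !hg in Heq. lra.
Qed.

Section Homeomorphism.

Variables (P Q : nat -> Prop) (h g : R -> R).
Hypothesis gh : forall x, g (h x) = x.
Hypothesis hg : forall y, h (g y) = y.
Hypothesis h_cont : continuous_between (frame_top P) (frame_top Q) h.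

Lemma escapes_transfer (up up' : bool) :
  (forall M, exists N, forall y, beyond up N y -> beyond up' M (h y)) ->
  forall x, escapes P up x -> escapes Q up' (h x).
Proof.
  intros Hbeyond x Hx M e He. destruct (Hbeyond M) as [N HN].
  destruct (metric_continuous _ _ h (frame_metric_is_metric Q) h_cont x e He) as [r [Hr Hball]].
  destruct (Hx N r Hr) as [y [Hy Hxy]]. exists (h y). auto.
Qed.

Lemma increasing_beyond : strict_increasing h ->
  forall up M, exists N, forall y, beyond up N y -> beyond up M (h y).
Proof.
  intros Hinc up M. exists (g M). intros y Hy.
  destruct up; simpl in *; (destruct Hy as [Hy|Hy]; [apply Hinc in Hy | subst y]);
    rewrite hg in *; lra.
Qed.

Lemma decreasing_beyond : strict_decreasing h ->
  forall up M, exists N, forall y, beyond up N y -> beyond (negb up) M (h y).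
Proof.
  intros Hdec up M. exists (g M). intros y Hy.
  destruct up; simpl in *; (destruct Hy as [Hy|Hy]; [apply Hdec in Hy | subst y]);
    rewrite hg in *; lra.
Qed.

(* A decreasing [h] would exchange the two ends: [h 0] and [h 1] (images of points
   escaping to -oo) are >= 0, and a small [y] in [(0, h 0)], the image of a point
   escaping to +oo, would then lie in the frame, which has no points in [(0, 1)]. *)
Lemma homeomorphism_increasing : strict_increasing h.
Proof.
  assert (Hinj : forall x y, h x = h y -> x = y)
    by (intros x y E; rewrite <- (gh x), <- (gh y), E; reflexivity).
  pose proof (dnorm_continuous_continuity h (frame_top_continuous_dnorm_continuous P Q h h_cont)).
  destruct (continuous_injective_monotone h) as [|Hdec]; [assumption .. |].
  exfalso. pose proof (decreasing_beyond Hdec) as Hbeyond.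
  assert (Hescape : forall x, escapes P false x -> 0 <= h x).
  { intros x Hx. apply (escapes_up_iff Q).
    apply (escapes_transfer false true (Hbeyond false) x Hx). }
  assert (H0 : 0 <= h 0) by (apply Hescape, escapes_down_iff; left; lra).
  assert (H1 : 0 <= h 1).
  { apply Hescape, escapes_down_iff. right. exists 1%nat. left. symmetry. apply node_1. }
  pose proof (Hdec 0 1 ltac:(lra)).
  set (y := Rmin (h 0) (/4) / 2). pose proof (Rmin_l (h 0) (/4)). pose proof (Rmin_r (h 0) (/4)).
  assert (0 < Rmin (h 0) (/4)) by (apply Rmin_pos; lra).
  assert (Hy : 0 < y < h 0 /\ y < /2) by (unfold y; lra).
  assert (Hgy : 0 <= g y).
  { apply Rnot_lt_le. intros Hneg. apply Hdec in Hneg. rewrite hg in Hneg. lra. }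
  assert (Hframe : escapes Q false y).
  { rewrite <- (hg y). apply (escapes_transfer true false (Hbeyond true)).
    apply escapes_up_iff. assumption. }
  apply escapes_down_iff in Hframe. destruct Hframe as [|Hframe]; [lra|].
  pose proof (frame_gap Q y Hframe). lra.
Qed.

Lemma homeomorphism_frame (x : R) : frame P x -> frame Q (h x).
Proof.
  intros Hx. pose proof homeomorphism_increasing as Hinc. pose proof (frame_ge0 P x Hx).
  assert (Hup : escapes Q true (h x)).
  { apply (escapes_transfer true); [apply increasing_beyond; assumption|].
    apply escapes_up_iff. assumption. }
  assert (Hdown : escapes Q false (h x)).
  { apply (escapes_transfer false); [apply increasing_beyond; assumption|].
    apply escapes_down_iff. right. assumption. }
  apply escapes_up_iff in Hup. apply escapes_down_iff in Hdown.
  destruct Hdown as [Hle|]; [|assumption]. replace (h x) with 0 by lra. apply frame_0.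
Qed.

End Homeomorphism.

Lemma homeomorphism_left_isolated (P Q : nat -> Prop) (h g : R -> R) :
  (forall x, g (h x) = x) -> (forall y, h (g y) = y) ->
  continuous_between (frame_top P) (frame_top Q) h ->
  continuous_between (frame_top Q) (frame_top P) g ->
  forall x, left_isolated P x -> left_isolated Q (h x).
Proof.
  intros gh hg Hh Hg x [Hx [w [Hw Hgap]]].
  pose proof (homeomorphism_increasing P Q h g gh hg Hh) as Hinc.
  pose proof (strict_increasing_inverse h g hg Hinc) as Ginc.
  split; [apply (homeomorphism_frame P Q h g gh hg Hh); assumption|].
  exists (h w). split; [apply Hinc; assumption|]. intros y [Hwy Hyx] Hy.
  apply (Hgap (g y)).
  - apply Ginc in Hwy. apply Ginc in Hyx. rewrite !gh in *. lra.
  - apply (homeomorphism_frame Q P g h hg gh Hg). assumption.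
Qed.

Lemma homeomorphism_node_ge (P Q : nat -> Prop) (h g : R -> R) :
  (forall x, g (h x) = x) -> (forall y, h (g y) = y) ->
  continuous_between (frame_top P) (frame_top Q) h ->
  continuous_between (frame_top Q) (frame_top P) g ->
  forall n, node n <= h (node n).
Proof.
  intros gh hg Hh Hg.
  assert (Hnode : forall n, exists m, h (node n) = node m).
  { intros n. apply (left_isolated_node Q).
    apply (homeomorphism_left_isolated P Q h g); [assumption .. | apply node_left_isolated]. }
  pose proof (homeomorphism_increasing P Q h g gh hg Hh) as Hinc.
  induction n as [|n IH].
  - destruct (Hnode 0%nat) as [m ->]. apply node_ge0.
  - destruct (Hnode (S n)) as [m Hm]. rewrite Hm.
    assert (Hlt : h (node n) < h (node (S n))) by (apply Hinc; pose proof (node_succ n); lra).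
    destruct (le_lt_dec m n) as [Hmn|Hnm].
    + pose proof (node_le _ _ Hmn). lra.
    + apply node_le. lia.
Qed.

Lemma homeomorphism_fixes_nodes (P Q : nat -> Prop) (h g : R -> R) :
  (forall x, g (h x) = x) -> (forall y, h (g y) = y) ->
  continuous_between (frame_top P) (frame_top Q) h ->
  continuous_between (frame_top Q) (frame_top P) g ->
  forall n, h (node n) = node n.
Proof.
  intros gh hg Hh Hg n.
  pose proof (homeomorphism_node_ge P Q h g gh hg Hh Hg n) as Hh_ge.
  pose proof (homeomorphism_node_ge Q P g h hg gh Hg Hh n) as Hg_ge.
  pose proof (homeomorphism_increasing P Q h g gh hg Hh) as Hinc.
  assert (h (node n) <= h (g (node n))); [|rewrite hg in *; lra].
  destruct (Rle_lt_or_eq_dec _ _ Hg_ge) as [Hlt|Heq]; [left; apply Hinc; assumption|].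
  rewrite <- Heq. lra.
Qed.

Lemma homeomorphic_frame_top_incl (P Q : nat -> Prop) :
  homeomorphic (frame_top P) (frame_top Q) -> forall n, P n -> Q n.
Proof.
  intros [h [g [gh [hg [Hh Hg]]]]] n Pn.
  pose proof (homeomorphism_increasing P Q h g gh hg Hh) as Hinc.
  set (y := node (S n) + /4).
  assert (Hy : frame P y) by (exists (S n); right; exists n; unfold y; repeat split; auto; lra).
  apply (frame_between_nodes Q n (h y)).
  { apply (homeomorphism_frame P Q h g gh hg Hh). assumption. }
  rewrite <- (homeomorphism_fixes_nodes P Q h g gh hg Hh Hg (S n)).
  rewrite <- (homeomorphism_fixes_nodes P Q h g gh hg Hh Hg (S (S n))).
  pose proof (node_succ (S n)). split; apply Hinc; unfold y; lra.
Qed.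

Definition dyadic (n : nat) : R := let (i, j) := Cantor.of_nat n in INR i / 2 ^ j - 2 ^ j.

Lemma dyadic_dense (r s : R) : r < s -> exists n, r <= dyadic n < s.
Proof.
  intros Hrs.
  destruct (pow2_large_and_half_pow_small (s - r) (Rabs r + 1) ltac:(lra)) as [j [Hj1 Hj2]].
  pose proof (pow2_pos j). pose proof (Rle_abs (- r)). rewrite Rabs_Ropp in *.
  set (w := (r + 2 ^ j) * 2 ^ j).
  assert (Hw : 0 < w) by (unfold w; apply Rmult_lt_0_compat; lra).
  destruct (archimed w) as [Hup1 Hup2].
  assert (Hup : (0 <= up w)%Z) by (apply le_IZR; lra).
  exists (Cantor.to_nat (Z.to_nat (up w), j)). unfold dyadic. rewrite Cantor.cancel_of_to.
  rewrite INR_IZR_INZ, Z2Nat.id by exact Hup.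
  assert (E : IZR (up w) / 2 ^ j - 2 ^ j - r = (IZR (up w) - w) / 2 ^ j) by (unfold w; field; lra).
  assert (0 < (IZR (up w) - w) / 2 ^ j) by (apply Rdiv_lt_0_compat; lra).
  assert ((IZR (up w) - w) / 2 ^ j <= (/2) ^ j).
  { rewrite pow_inv. unfold Rdiv. rewrite <- (Rmult_1_l (/ 2 ^ j)) at 2.
    apply Rmult_le_compat_r; [left; apply Rinv_0_lt_compat|]; lra. }
  lra.
Qed.

Definition dyadics_below (r : R) (n : nat) : Prop := dyadic n < r.

Lemma homeomorphic_sym (tau sigma : topology_on_R) :
  homeomorphic tau sigma -> homeomorphic sigma tau.
Proof. intros [h [g [gh [hg [Hh Hg]]]]]. exists g, h. auto. Qed.

Lemma homeomorphic_frame_top_dyadics_le (r s : R) :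
  homeomorphic (frame_top (dyadics_below r)) (frame_top (dyadics_below s)) -> r <= s.
Proof.
  intros Hhom. apply Rnot_lt_le. intros Hsr. destruct (dyadic_dense s r Hsr) as [n Hn].
  pose proof (homeomorphic_frame_top_incl _ _ Hhom n). unfold dyadics_below in *. lra.
Qed.

Theorem theorem6 :
  exists T : R -> topology_on_R,
    (forall r, in_L (T r) /\ metrizable (T r) /\ first_category (T r)) /\
    (forall r s, r <> s -> ~ homeomorphic (T r) (T s)).
Proof.
  exists (fun r => frame_top (dyadics_below r)). split.
  - intros r. split; [apply frame_top_in_L|].
    split; [apply metric_top_metrizable, frame_metric_is_metric | apply frame_top_first_category].
  - intros r s Hrs Hhom. apply Hrs, Rle_antisym.
    + apply homeomorphic_frame_top_dyadics_le. assumption.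
    + apply homeomorphic_frame_top_dyadics_le, homeomorphic_sym. assumption.
Qed.
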